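(* Let $n \geq 2$ be an integer and $A$ a finite set of size $q \geq 2$. Then \[ \operatorname{Rank}(\mathrm{CA}(\mathbb{Z}_n; A) : \mathrm{ICA}(\mathbb{Z}_n; A)) = \begin{cases} E(n) - 1, & \text{if } q=2 \text{ and } n \text{ is even}, \\ E(n), & \text{otherwise.} \end{cases} \]
   Context: A cellular automaton over $\mathbb{Z}_n$ and $A$ is a map $\tau: A^{\mathbb{Z}_n}\to A^{\mathbb{Z}_n}$ for which there exist a finite $S\subseteq\mathbb{Z}_n$ and $\mu:A^S\to A$ with $(g)(x)\tau = ((R_g\circ x)|_S)\mu$ for all $x$ and $g$, where $R_g\circ x$ is $h\mapsto x(h+g)$ (maps applied on the right); $\mathrm{CA}(\mathbb{Z}_n;A)$ is the semigroup of these under composition and $\mathrm{ICA}(\mathbb{Z}_n;A)$ is its group of units. For a finite semigroup $M$ and $U\subseteq M$, the relative rank $\operatorname{Rank}(M:U)$ is the minimum size of a subset $V\subseteq M$ such that $U\cup V$ generates $M$. $E(n) := |\{(s,t)\in\{1,\dots,n\}^2 : s\mid n,\ t\mid n,\ t\mid s\}|$. *)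

From HB Require Import structures.
From mathcomp Require Import all_boot all_order all_algebra.
Set Implicit Arguments. Unset Strict Implicit. Unset Printing Implicit Defensive.
Import GRing.Theory.
Local Open Scope ring_scope.

(* Configurations A^{Z_n}; 'Z_n is Z/nZ for n >= 2 (hypothesis n >= 2 in the theorem). *)
Definition config (n : nat) (A : finType) := {ffun 'Z_n -> A}.

Definition cmap (n : nat) (A : finType) := {ffun config n A -> config n A}.

Definition shift (n : nat) (A : finType) (g : 'Z_n) (x : config n A) : config n A :=
  [ffun h => x (h + g)].

(* A local map on A^S is
   represented as a map on A^{Z_n} depending only on the restriction to S. *)
Definition is_CA (n : nat) (A : finType) (tau : cmap n A) : Prop :=
  exists (S : {set 'Z_n}) (mu : config n A -> A),
    (forall x y : config n A, (forall s, s \in S -> x s = y s) -> mu x = mu y) /\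
    (forall (x : config n A) (g : 'Z_n), tau x g = mu (shift g x)).

Definition cid (n : nat) (A : finType) : cmap n A := [ffun x => x].

(* composition, maps applied on the right: x (tau sigma) = (x tau) sigma *)
Definition ccomp (n : nat) (A : finType) (tau sigma : cmap n A) : cmap n A :=
  [ffun x => sigma (tau x)].

Definition is_ICA (n : nat) (A : finType) (tau : cmap n A) : Prop :=
  is_CA tau /\ exists sigma, is_CA sigma /\
    ccomp tau sigma = cid n A /\ ccomp sigma tau = cid n A.

Inductive sgen (n : nat) (A : finType) (W : cmap n A -> Prop) : cmap n A -> Prop :=
  | sgen_base f : W f -> sgen W f
  | sgen_comp f g : sgen W f -> sgen W g -> sgen W (ccomp f g).

Definition generates (n : nat) (A : finType) (M U : cmap n A -> Prop) (V : {set cmap n A}) :=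
  forall f, M f <-> sgen (fun h => U h \/ h \in V) f.

Definition relative_rank_is (n : nat) (A : finType) (M U : cmap n A -> Prop) (r : nat) : Prop :=
  (exists V : {set cmap n A}, (forall f, f \in V -> M f) /\ generates M U V /\ #|V| = r) /\
  (forall V : {set cmap n A}, (forall f, f \in V -> M f) -> generates M U V -> (r <= #|V|)%N).

Definition E (n : nat) : nat :=
  (\sum_(1 <= s < n.+1) \sum_(1 <= t < n.+1) [&& s %| n, t %| n & t %| s])%N.

From mathcomp Require Import all_boot all_order all_algebra.
Set Implicit Arguments. Unset Strict Implicit. Unset Printing Implicit Defensive.
Import GRing.Theory.

(* Over Z_n a cellular automaton is just a shift-equivariant self-map of
   A^{Z_n}, and it is a unit iff it is injective.  Every non-invertible one is
   a product of units and "orbit moves" e(x -> y), which send the orbit of x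
   onto the orbit of y (y outside it, stabiliser of x inside that of y) and fix
   everything else; conjugating by units, one orbit move for each admissible
   pair of periods (period x, period y) suffices.  Conversely, if U u V
   generates, some non-injective h in V occurs in a factorisation of e(x -> y)
   and then |A^{Z_n}| - |image h| = period x while exactly period y points have
   two preimages under h, so V meets every admissible pair of periods.  These
   pairs are the (s, t) with t | s | n, except (2, 2) for a binary alphabet:
   there all configurations of period 2 lie in one orbit. *)

Section CyclicCA.
Variables (m : nat) (A : finType).
Local Notation N := m.+2.
Local Notation X := (config N A).
Local Notation G := 'Z_N.

Lemma shiftE (g : G) (x : X) h : shift g x h = x (h + g)%R.
Proof. by rewrite /shift ffunE. Qed.

Lemma shiftD (g k : G) (x : X) : shift g (shift k x) = shift (k + g)%R x.
Proof. by apply/ffunP=> h; rewrite !shiftE (addrC k) addrA. Qed.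

Lemma shift0 (x : X) : shift 0%R x = x.
Proof. by apply/ffunP=> h; rewrite shiftE addr0. Qed.

Lemma shiftNK (g : G) (x : X) : shift (- g)%R (shift g x) = x.
Proof. by rewrite shiftD subrr shift0. Qed.

Lemma shift_inj (g : G) : injective (@shift N A g).
Proof. exact: can_inj (shiftNK g). Qed.

Definition equivariant (f : cmap N A) := forall (g : G) x, f (shift g x) = shift g (f x).

Lemma ccompE (f g : cmap N A) x : ccomp f g x = g (f x).
Proof. by rewrite ffunE. Qed.

Lemma equivariant_comp f g : equivariant f -> equivariant g -> equivariant (ccomp f g).
Proof. by move=> f_eq g_eq k x; rewrite !ccompE f_eq g_eq. Qed.

Lemma CA_equivariant f : is_CA f <-> equivariant f.
Proof.
split=> [[S [mu [_ f_mu]]] g x | f_eq].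
  by apply/ffunP=> h; rewrite f_mu shiftE f_mu shiftD addrC.
exists setT, (fun x => f x 0%R); split=> [x y xy | x g].
  by congr (f _ _); apply/ffunP=> s; apply: xy; rewrite inE.
by rewrite f_eq shiftE add0r.
Qed.

Lemma ICA_equivariant f : is_ICA f <-> equivariant f /\ injective f.
Proof.
split=> [[/CA_equivariant f_eq [s [_ [fs _]]]] | [f_eq f_inj]].
  split=> //; apply: (can_inj (g := s)) => x.
  by have := congr1 (fun h : cmap N A => h x) fs; rewrite ccompE ffunE.
split; first exact/CA_equivariant.
pose s : cmap N A := [ffun y => invF f_inj y].
have sE y : s y = invF f_inj y by rewrite ffunE.
exists s; split; last by split; apply/ffunP=> x; rewrite ccompE !ffunE ?invF_f ?f_invF.
by apply/CA_equivariant=> k y; apply: (f_inj); rewrite f_eq !sE !f_invF.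
Qed.

(** * Shift orbits and periods *)

Definition shift_orbit (x : X) : {set X} := [set shift g x | g : G].

Lemma shift_orbitP (x z : X) : reflect (exists g, z = shift g x) (z \in shift_orbit x).
Proof. by apply: (iffP imsetP) => [[g _ ->]|[g ->]]; exists g. Qed.

Lemma mem_shift_orbit g (x : X) : shift g x \in shift_orbit x.
Proof. by apply/shift_orbitP; exists g. Qed.

Lemma shift_orbit_refl (x : X) : x \in shift_orbit x.
Proof. by rewrite -{1}(shift0 x) mem_shift_orbit. Qed.

Lemma shift_orbit_shift g (x z : X) : (shift g z \in shift_orbit x) = (z \in shift_orbit x).
Proof.
apply/shift_orbitP/shift_orbitP=> [[k zk]|[k ->]]; last by exists (k + g)%R; rewrite shiftD.
by exists (k - g)%R; rewrite -[z](shiftNK g) zk shiftD.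
Qed.

Lemma shift_orbit_sym (x z : X) : z \in shift_orbit x -> x \in shift_orbit z.
Proof. by case/shift_orbitP=> g ->; rewrite -{1}(shiftNK g x) mem_shift_orbit. Qed.

Lemma shift_orbit_trans (x y z : X) :
  y \in shift_orbit x -> z \in shift_orbit y -> z \in shift_orbit x.
Proof.
by case/shift_orbitP=> g -> /shift_orbitP [k ->]; rewrite !shift_orbit_shift shift_orbit_refl.
Qed.

Lemma shift_orbit_notin (x y z : X) :
  y \notin shift_orbit x -> z \in shift_orbit y -> z \notin shift_orbit x.
Proof.
by move=> yx zy; apply: contra yx => zx; apply: shift_orbit_trans zx (shift_orbit_sym zy).
Qed.

Lemma shift_natD k j (x : X) : shift k%:R%R (shift j%:R%R x) = shift (j + k)%:R%R x.
Proof. by rewrite shiftD natrD. Qed.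

Lemma shift_natM k q (x : X) : shift k%:R%R x = x -> shift (k * q)%:R%R x = x.
Proof.
move=> xk; elim: q => [|q IHq]; first by rewrite muln0 shift0.
by rewrite mulnS -shift_natD xk IHq.
Qed.

Lemma shift_period_exists (x : X) : exists k, (0 < k) && (shift k%:R%R x == x).
Proof. by exists N; rewrite pchar_Zp // shift0 eqxx. Qed.

Definition period (x : X) := ex_minn (shift_period_exists x).

Lemma period_gt0 x : 0 < period x.
Proof. by rewrite /period; case: ex_minnP => p /andP []. Qed.

Lemma period_dvd x k : (shift k%:R%R x == x) = (period x %| k).
Proof.
rewrite /period; case: ex_minnP => p /andP [p_gt0 /eqP xp] p_min.
apply/eqP/idP=> [xk | /dvdnP [q ->]]; last by rewrite mulnC shift_natM.
have xr : shift (k %% p)%:R%R x = x.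
  apply: (@shift_inj (p * (k %/ p))%:R%R).
  by rewrite shift_natD addnC mulnC -divn_eq xk mulnC shift_natM.
apply/eqP; case: (posnP (k %% p)) => // r_gt0.
by have := p_min (k %% p); rewrite r_gt0 xr eqxx leqNgt ltn_pmod // => /(_ isT).
Qed.

Lemma shift_period x : shift (period x)%:R%R x = x.
Proof. by apply/eqP; rewrite period_dvd. Qed.

Lemma period_dvdN x : period x %| N.
Proof. by rewrite -period_dvd pchar_Zp // shift0. Qed.

Lemma period_leN x : period x <= N.
Proof. exact: dvdn_leq (period_dvdN x). Qed.

Lemma stab_period x (g : G) : (shift g x == x) = (period x %| val g).
Proof. by rewrite -period_dvd natr_Zp. Qed.

Lemma shift_nat_eq x i j : i <= j ->
  (shift j%:R%R x == shift i%:R%R x) = (j == i %[mod period x]).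
Proof.
move=> le_ij; rewrite eqn_mod_dvd // -period_dvd.
by rewrite -[in RHS](inj_eq (@shift_inj i%:R%R)) shift_natD subnK.
Qed.

Lemma card_shift_orbit x : #|shift_orbit x| = period x.
Proof.
have p_gt0 := period_gt0 x.
have -> : shift_orbit x = [set shift (val i)%:R%R x | i : 'I_(period x)].
  apply/setP=> z; apply/shift_orbitP/imsetP=> [[g ->]|[i _ ->]]; last by exists (val i)%:R%R.
  exists (Ordinal (ltn_pmod (val g) p_gt0)) => //=.
  rewrite -[in LHS](natr_Zp g) {1}(divn_eq (val g) (period x)) -shift_natD.
  by rewrite mulnC shift_natM ?shift_period.
rewrite card_imset ?card_ord // => i j eq_ij; apply/val_inj.
without loss le_ij : i j eq_ij / val i <= val j.
  by move=> le_eq; case: (leqP i j) => [|/ltnW] ?; [|apply/esym]; apply: le_eq.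
by move/eqP: eq_ij; rewrite eq_sym shift_nat_eq // !modn_small ?ltn_ord // => /eqP.
Qed.

Lemma periodE x d : 0 < d -> (forall k, (shift k%:R%R x == x) = (d %| k)) -> period x = d.
Proof.
by move=> d_gt0 xd; apply/eqP; rewrite eqn_dvd -xd shift_period -period_dvd xd dvdnn eqxx.
Qed.

Lemma period_equivariant_inj (u : cmap N A) x :
  equivariant u -> injective u -> period (u x) = period x.
Proof.
move=> u_eq u_inj; apply: periodE (period_gt0 x) _ => k.
by rewrite -u_eq (inj_eq u_inj) period_dvd.
Qed.

Lemma period_shift g x : period (shift g x) = period x.
Proof.
apply: periodE (period_gt0 x) _ => k.
by rewrite shiftD addrC -shiftD (inj_eq (@shift_inj _)) period_dvd.
Qed.

Lemma period_neq_notin x y : period y != period x -> y \notin shift_orbit x.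
Proof. by apply: contra => /shift_orbitP [g ->]; rewrite period_shift. Qed.

Definition stab_sub (x y : X) := forall g, shift g x = x -> shift g y = y.

Lemma stab_subP x y : stab_sub x y <-> period y %| period x.
Proof.
split=> [xy | yx g /eqP]; first by rewrite -period_dvd; apply/eqP/xy/shift_period.
by rewrite stab_period => /(dvdn_trans yx); rewrite -stab_period => /eqP.
Qed.

Lemma stab_sub_period_eq x y : period x = period y -> stab_sub x y.
Proof. by move=> xy; apply/stab_subP; rewrite xy. Qed.

(** * Orbit moves *)

Definition orbit_move (x y : X) : cmap N A :=
  [ffun z => if [pick g | z == shift g x] is Some g then shift g y else z].

Lemma orbit_move_shift x y g : stab_sub x y -> orbit_move x y (shift g x) = shift g y.
Proof.
move=> xy; rewrite ffunE; case: pickP => [k /eqP gk|/(_ g)]; last by rewrite eqxx.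
have /xy yk : shift (g - k)%R x = x by rewrite -shiftD gk shiftNK.
by rewrite -[in LHS]yk shiftD subrK.
Qed.

Lemma orbit_move_refl x y : stab_sub x y -> orbit_move x y x = y.
Proof. by move=> xy; have := orbit_move_shift 0%R xy; rewrite !shift0. Qed.

Lemma orbit_move_id x y z : z \notin shift_orbit x -> orbit_move x y z = z.
Proof.
move=> zx; rewrite ffunE; case: pickP => [k /eqP zk|//].
by move: zx; rewrite zk mem_shift_orbit.
Qed.

Lemma orbit_move_equivariant x y : stab_sub x y -> equivariant (orbit_move x y).
Proof.
move=> xy g z; have [/shift_orbitP [k ->]|zx] := boolP (z \in shift_orbit x).
  by rewrite shiftD !orbit_move_shift // shiftD.
by rewrite !orbit_move_id ?shift_orbit_shift.
Qed.

Lemma orbit_move_conj x0 y0 x y (u : cmap N A) :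
  equivariant u -> injective u -> u x0 = x -> u y0 = y ->
  stab_sub x0 y0 -> stab_sub x y -> forall z, orbit_move x y (u z) = u (orbit_move x0 y0 z).
Proof.
move=> u_eq u_inj ux uy s0 s z; have [/shift_orbitP [k ->]|zx0] := boolP (z \in shift_orbit x0).
  by rewrite u_eq ux !orbit_move_shift // u_eq uy.
rewrite !orbit_move_id //; apply: contra zx0 => /shift_orbitP [k].
by rewrite -ux -u_eq => /u_inj ->; apply: mem_shift_orbit.
Qed.

Section OrbitSwap.
Variables x y : X.
Hypothesis pxy : period x = period y.

Let sxy : stab_sub x y := stab_sub_period_eq pxy.
Let syx : stab_sub y x := stab_sub_period_eq (esym pxy).

Definition orbit_swap : cmap N A :=
  [ffun z => if z \in shift_orbit x then orbit_move x y z else orbit_move y x z].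

Lemma orbit_swapE z :
  orbit_swap z = if z \in shift_orbit x then orbit_move x y z else orbit_move y x z.
Proof. by rewrite ffunE. Qed.

Lemma orbit_swap_equivariant : equivariant orbit_swap.
Proof.
move=> g z; rewrite !orbit_swapE shift_orbit_shift.
by case: ifP => _; apply: orbit_move_equivariant.
Qed.

Lemma orbit_swap_inj : injective orbit_swap.
Proof.
suff swapK : cancel orbit_swap [ffun z => if z \in shift_orbit y then orbit_move y x z
                                            else orbit_move x y z].
  exact: can_inj swapK.
move=> z; rewrite ffunE orbit_swapE.
have [/shift_orbitP [g ->]|zx] := boolP (z \in shift_orbit x).
  by rewrite !orbit_move_shift // mem_shift_orbit.
have [/shift_orbitP [g zy]|zy] := boolP (z \in shift_orbit y).
  rewrite zy !orbit_move_shift // shift_orbit_shift.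
  have [xy|//] := boolP (x \in shift_orbit y).
  by move: zx; rewrite zy shift_orbit_shift (shift_orbit_sym xy).
by rewrite !orbit_move_id ?(negPf zx) ?(negPf zy).
Qed.

Lemma orbit_swap_l : orbit_swap x = y.
Proof. by rewrite orbit_swapE shift_orbit_refl orbit_move_refl. Qed.

Lemma orbit_swap_id z : z \notin shift_orbit x -> z \notin shift_orbit y -> orbit_swap z = z.
Proof. by move=> zx zy; rewrite orbit_swapE (negPf zx) orbit_move_id. Qed.

End OrbitSwap.

Lemma units_transitive x0 y0 x y :
  y0 \notin shift_orbit x0 -> y \notin shift_orbit x ->
  period x0 = period x -> period y0 = period y ->
  exists u : cmap N A, [/\ equivariant u, injective u, u x0 = x & u y0 = y].
Proof.
move=> y0x0 yx px py.
pose y1 : X := orbit_swap x0 x y0.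
have u1_eq := orbit_swap_equivariant px; have u1_inj := orbit_swap_inj px.
have py1 : period y1 = period y by rewrite period_equivariant_inj.
have y1x : y1 \notin shift_orbit x.
  apply: contra y0x0 => /shift_orbitP [g]; rewrite -(orbit_swap_l px) -u1_eq.
  by move/u1_inj ->; apply: mem_shift_orbit.
exists (ccomp (orbit_swap x0 x) (orbit_swap y1 y)); split.
- exact: equivariant_comp u1_eq (orbit_swap_equivariant py1).
- by move=> a b; rewrite !ccompE => /(orbit_swap_inj py1) /u1_inj.
- rewrite ccompE orbit_swap_l // orbit_swap_id //.
    by apply: contra y1x; apply: shift_orbit_sym.
  by apply: contra yx; apply: shift_orbit_sym.
- by rewrite ccompE orbit_swap_l.
Qed.

(** * Invariants of non-injective generators *)

Definition defect (h : cmap N A) := #|X| - #|[set h z | z : X]|.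

Definition collisions (h : cmap N A) := #|[set y : X | 1 < #|[set z | h z == y]|]|.

Lemma defect_comp_inj (u h : cmap N A) : injective u -> defect (ccomp u h) = defect h.
Proof.
move=> u_inj; congr (_ - _); apply: eq_card => y.
apply/imsetP/imsetP=> [[z _ ->]|[z _ ->]]; first by exists (u z); rewrite ?ccompE.
by exists (invF u_inj z); rewrite ?ccompE ?f_invF.
Qed.

Lemma collisions_comp_inj (u h : cmap N A) : injective u -> collisions (ccomp u h) = collisions h.
Proof.
move=> u_inj; apply: eq_card => y; rewrite !inE.
have -> : [set z | ccomp u h z == y] = u @^-1: [set z | h z == y].
  by apply/setP=> z; rewrite !inE ccompE.
by rewrite card_preimset.
Qed.

Section OrbitMoveKernel.
Variables (x0 y0 : X) (h : cmap N A).
Hypotheses (y0x0 : y0 \notin shift_orbit x0) (sx0y0 : stab_sub x0 y0).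
Hypotheses (h_eq : equivariant h) (h_noninj : ~~ injectiveb h).
Hypothesis h_ker : forall a b, h a = h b -> orbit_move x0 y0 a = orbit_move x0 y0 b.

Lemma inj_off_orbit a b :
  a \notin shift_orbit x0 -> b \notin shift_orbit x0 -> h a = h b -> a = b.
Proof. by move=> ax0 bx0 /h_ker; rewrite !orbit_move_id. Qed.

(* [h] maps the fixed points of [shift k] off the orbit of [x0] bijectively
   onto the fixed points in the image of the complement; [h x0] is a fixed
   point outside that image, so by counting some fixed point of [shift k] lies
   on the orbit of [x0]. *)
Lemma no_cross_collision_stab (k : G) :
  (forall a b, a \in shift_orbit x0 -> b \notin shift_orbit x0 -> h a != h b) ->
  shift k (h x0) = h x0 -> shift k x0 = x0.
Proof.
move=> no_cross hk.
pose F := [set z : X | shift k z == z].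
pose H := [set h z | z in ~: shift_orbit x0].
have FH : #|F :&: H| = #|F :\: shift_orbit x0|.
  have -> : F :&: H = [set h z | z in F :\: shift_orbit x0].
    apply/setP=> y; rewrite !inE; apply/andP/imsetP=> [[/eqP ky /imsetP [z zx0 yz]]|[z]].
      rewrite inE in zx0; exists z => //; rewrite !inE zx0 /=.
      by apply/eqP; apply: inj_off_orbit; rewrite ?shift_orbit_shift // h_eq -yz.
    rewrite !inE => /andP [zx0 /eqP kz] ->; split; first by rewrite -h_eq kz.
    by apply/imsetP; exists z; rewrite // inE.
  rewrite card_in_imset // => a b; rewrite !inE => /andP [ax0 _] /andP [bx0 _].
  exact: inj_off_orbit.
have hx0 : h x0 \in F :\: H.
  rewrite !inE hk eqxx andbT; apply/imsetP=> [[z]].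
  by rewrite inE => zx0; apply/eqP/no_cross; rewrite ?shift_orbit_refl.
have : 0 < #|F :&: shift_orbit x0|.
  have := cardsID H F; have := cardsID (shift_orbit x0) F.
  rewrite FH => <- /eqP; rewrite addnC eqn_add2r => /eqP <-.
  by apply/card_gt0P; exists (h x0).
case/card_gt0P=> z; rewrite !inE => /andP [/eqP kz /shift_orbitP [l zl]].
by apply: (@shift_inj l); rewrite shiftD addrC -shiftD -zl.
Qed.

Lemma cross_collision :
  exists a b, [/\ a \in shift_orbit x0, b \notin shift_orbit x0 & h a = h b].
Proof.
have [/existsP [a /existsP [b /and3P [ax0 bx0 /eqP hab]]]|] := boolP
  [exists a, exists b, [&& a \in shift_orbit x0, b \notin shift_orbit x0 & h a == h b]].
  by exists a, b.
move=> cross; have {cross} no_cross a b :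
    a \in shift_orbit x0 -> b \notin shift_orbit x0 -> h a != h b.
  move=> ax0 bx0; apply: contraNneq cross => hab.
  by apply/existsP; exists a; apply/existsP; exists b; rewrite ax0 bx0 hab eqxx.
case/injectivePn: h_noninj => a [b ab hab]; exfalso.
have [ax0 bx0] : a \in shift_orbit x0 /\ b \in shift_orbit x0.
  have [ax0|ax0] := boolP (a \in _); have [bx0|bx0] := boolP (b \in _) => //.
  - by have := no_cross a b ax0 bx0; rewrite hab eqxx.
  - by have := no_cross b a bx0 ax0; rewrite hab eqxx.
  - by move: ab; rewrite (inj_off_orbit ax0 bx0 hab) eqxx.
case/shift_orbitP: ax0 ab hab => i ->; case/shift_orbitP: bx0 => j -> ij hij.
have hk : shift (j - i)%R (h x0) = h x0.
  by apply: (@shift_inj i); rewrite shiftD subrK -!h_eq hij.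
move: ij; rewrite -(subrK i j) -shiftD.
by rewrite (no_cross_collision_stab no_cross hk) eqxx.
Qed.

Lemma h_x0_y0 : h x0 = h y0.
Proof.
have [a [b [/shift_orbitP [i ->] bx0 hab]]] := cross_collision.
have := h_ker hab; rewrite (orbit_move_id _ bx0) orbit_move_shift // => y0b.
by apply: (@shift_inj i); rewrite -!h_eq hab y0b.
Qed.

Lemma image_off_orbit : [set h z | z : X] = [set h z | z in ~: shift_orbit x0].
Proof.
apply/setP=> y; apply/imsetP/imsetP=> [[z _ ->]|[z _ ->]]; last by exists z.
have [/shift_orbitP [i ->]|zx0] := boolP (z \in shift_orbit x0); last by exists z; rewrite ?inE.
by exists (shift i y0); rewrite ?inE ?shift_orbit_shift // !h_eq h_x0_y0.
Qed.

Lemma defect_orbit_move_kernel : defect h = period x0.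
Proof.
rewrite /defect image_off_orbit card_in_imset; last first.
  by move=> a b; rewrite !inE; apply: inj_off_orbit.
by rewrite -card_shift_orbit -(cardsC (shift_orbit x0)) addnK.
Qed.

Lemma collisions_orbit_move_kernel : collisions h = period y0.
Proof.
rewrite /collisions -card_shift_orbit.
have -> : [set y : X | 1 < #|[set z | h z == y]|] = [set h z | z in shift_orbit y0].
  apply/setP=> y; rewrite inE; apply/idP/imsetP.
    case/card_gt1P=> a [b [hay hby ab]]; rewrite !inE in hay hby.
    suff [i ->] : exists i, y = h (shift i x0).
      by exists (shift i y0); rewrite ?mem_shift_orbit // !h_eq h_x0_y0.
    have [/shift_orbitP [i ai]|ax0] := boolP (a \in shift_orbit x0).
      by exists i; rewrite -ai (eqP hay).
    have [/shift_orbitP [i bi]|bx0] := boolP (b \in shift_orbit x0).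
      by exists i; rewrite -bi (eqP hby).
    by move: ab; rewrite (inj_off_orbit ax0 bx0) ?eqxx // (eqP hay) (eqP hby).
  case=> z /shift_orbitP [i ->] ->; apply/card_gt1P.
  exists (shift i y0), (shift i x0); rewrite !inE !h_eq h_x0_y0 eqxx; split=> //.
  by apply: contraNneq y0x0 => /shift_inj ->; apply: shift_orbit_refl.
rewrite card_in_imset // => a b ay0 by0; apply: inj_off_orbit;
  exact: shift_orbit_notin y0x0 _.
Qed.

End OrbitMoveKernel.

(** * Generation by units and orbit moves *)

Definition unit_or_in (V : {set cmap N A}) (h : cmap N A) := is_ICA h \/ h \in V.

Lemma sgen_equivariant (V : {set cmap N A}) : (forall v, v \in V -> is_CA v) ->
  forall f, sgen (unit_or_in V) f -> equivariant f.
Proof.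
move=> V_CA f; elim=> [g [/ICA_equivariant [] //|/V_CA /CA_equivariant //]|g k _ g_eq _ k_eq].
exact: equivariant_comp.
Qed.

Lemma sgen_noninjective_factor (V : {set cmap N A}) : (forall v, v \in V -> is_CA v) ->
  forall f, sgen (unit_or_in V) f -> injective f \/
  exists (h u : cmap N A) (a : X -> X), [/\ h \in V, ~~ injectiveb h, equivariant u,
    injective u & forall x, f x = a (h (u x))].
Proof.
move=> V_CA f; elim=> [g [/ICA_equivariant [_ g_inj]|gV]|g k g_gen IHg _ IHk].
- by left.
- have [/injectiveP|g_noninj] := boolP (injectiveb g); first by left.
  by right; exists g, (cid N A), id; split=> // [k x|x y|x]; rewrite !ffunE.
case: IHg => [g_inj|[h [u [a [hV h_noninj u_eq u_inj g_fact]]]]]; last first.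
  by right; exists h, u, (fun y => k (a y)); split=> // x; rewrite ccompE g_fact.
case: IHk => [k_inj|[h [u [a [hV h_noninj u_eq u_inj k_fact]]]]].
  by left=> x y; rewrite !ccompE => /k_inj /g_inj.
right; exists h, (ccomp g u), a; split=> //.
- exact: equivariant_comp (sgen_equivariant V_CA g_gen) u_eq.
- by move=> x y; rewrite !ccompE => /u_inj /g_inj.
- by move=> x; rewrite !ccompE k_fact.
Qed.

Lemma generators_realize_periods (V : {set cmap N A}) : (forall v, v \in V -> is_CA v) ->
  generates (@is_CA N A) (@is_ICA N A) V ->
  forall x0 y0, y0 \notin shift_orbit x0 -> stab_sub x0 y0 ->
  exists2 h, h \in V & defect h = period x0 /\ collisions h = period y0.
Proof.
move=> V_CA V_gen x0 y0 y0x0 sxy.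
have e_CA : is_CA (orbit_move x0 y0) by apply/CA_equivariant/orbit_move_equivariant.
case: (sgen_noninjective_factor V_CA ((V_gen _).1 e_CA)) => [e_inj|].
  have x0y0 : x0 = y0 by apply: e_inj; rewrite orbit_move_refl // orbit_move_id.
  by move: y0x0; rewrite -x0y0 shift_orbit_refl.
case=> h [u [a [hV h_noninj u_eq u_inj e_fact]]].
exists h => //; rewrite -(defect_comp_inj h u_inj) -(collisions_comp_inj h u_inj).
have uh_eq : equivariant (ccomp u h).
  by apply: equivariant_comp u_eq _; apply/CA_equivariant/V_CA.
have uh_noninj : ~~ injectiveb (ccomp u h).
  apply: contra h_noninj => /injectiveP uh_inj; apply/injectiveP=> b c hbc.
  by apply: (can_inj (f_invF u_inj)); apply: uh_inj; rewrite !ccompE !f_invF.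
have uh_ker b c : ccomp u h b = ccomp u h c -> orbit_move x0 y0 b = orbit_move x0 y0 c.
  by rewrite !ccompE !e_fact => ->.
split; [exact: defect_orbit_move_kernel uh_ker | exact: collisions_orbit_move_kernel uh_ker].
Qed.

Lemma noninjective_missed (f : X -> X) : ~~ injectiveb f -> exists z, forall x, f x != z.
Proof.
move=> f_noninj; case: (pickP [predC codom f]) => [z /= zf|im_f].
  by exists z => x; apply: contraNneq zf => <-; apply: codom_f.
have /image_injP f_inj : #|codom f| == #|X|.
  by rewrite eq_cardT -?cardE // => z; move: (im_f z); rewrite !inE => /negbFE.
by case/negP: f_noninj; apply/injectiveP=> x y; apply: f_inj.
Qed.

(* If [z] is not a value of [f], then [f] is [g] followed by the orbit move
   [z -> f z], where [g] fixes the orbit of [z] and agrees with [f] elsewhere. *)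
Lemma orbit_move_factor f : equivariant f -> ~~ injectiveb f ->
  exists z (g : cmap N A), [/\ equivariant g, f z \notin shift_orbit z, stab_sub z (f z),
    f = ccomp g (orbit_move z (f z)) & #|[set x | g x != x]| < #|[set x | f x != x]|].
Proof.
move=> f_eq f_noninj; have [z fz] := noninjective_missed f_noninj.
have fwz w : f w \notin shift_orbit z.
  apply: contraT; rewrite negbK => /shift_orbit_sym /shift_orbitP [g fwg].
  by have := fz (shift g w); rewrite f_eq -fwg eqxx.
have szf : stab_sub z (f z) by move=> g zg; rewrite -f_eq zg.
pose g : cmap N A := [ffun w => if w \in shift_orbit z then w else f w].
have gE w : g w = if w \in shift_orbit z then w else f w by rewrite ffunE.
exists z, g; split=> //.
- by move=> k w; rewrite !gE shift_orbit_shift; case: ifP => // _; rewrite f_eq.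
- apply/ffunP=> w; rewrite ccompE gE.
  have [/shift_orbitP [i ->]|wz] := boolP (w \in shift_orbit z).
    by rewrite orbit_move_shift // f_eq.
  by rewrite orbit_move_id.
apply: proper_card; apply/properP; split.
  by apply/subsetP=> x; rewrite !inE gE; case: ifP; rewrite ?eqxx.
exists z; rewrite !inE ?gE ?shift_orbit_refl ?eqxx //.
Qed.

Lemma equivariant_sgen_orbit_moves (W : cmap N A -> Prop) :
  (forall h, is_ICA h -> W h) ->
  (forall x y, y \notin shift_orbit x -> stab_sub x y -> sgen W (orbit_move x y)) ->
  forall f, equivariant f -> sgen W f.
Proof.
move=> W_units W_moves.
suff moved_lt k (f : cmap N A) : #|[set x | f x != x]| < k -> equivariant f -> sgen W f.
  by move=> f; apply: moved_lt (ltnSn _).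
elim: k f => // k IHk f lt_fk f_eq.
have [/injectiveP f_inj|f_noninj] := boolP (injectiveb f).
  by apply/sgen_base/W_units/ICA_equivariant.
have [z [g [g_eq fzz szf f_def lt_gf]]] := orbit_move_factor f_eq f_noninj.
rewrite f_def; apply: sgen_comp; last exact: W_moves.
exact: IHk g (leq_trans lt_gf (ltnSE lt_fk)) g_eq.
Qed.

Lemma unit_inverse (u : cmap N A) : equivariant u -> injective u ->
  exists2 v : cmap N A, is_ICA v & forall x, u (v x) = x.
Proof.
move=> u_eq u_inj; exists [ffun y => invF u_inj y]; last by move=> x; rewrite ffunE f_invF.
apply/ICA_equivariant; split=> [g y|a b]; rewrite !ffunE.
  by apply: (u_inj); rewrite u_eq !f_invF.
by move/(congr1 u); rewrite !f_invF.
Qed.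

(** * The rank as a number of period pairs *)

Definition admissible (p : X * X) :=
  (p.2 \notin shift_orbit p.1) && (period p.2 %| period p.1).

Definition period_pair (p : X * X) : 'I_N.+1 * 'I_N.+1 :=
  (inord (period p.1), inord (period p.2)).

Definition period_pairs : {set 'I_N.+1 * 'I_N.+1} :=
  [set period_pair p | p : X * X & admissible p].

Lemma inord_period x : nat_of_ord (inord (period x) : 'I_N.+1) = period x.
Proof. by rewrite inordK // ltnS period_leN. Qed.

Lemma period_pairE p q : (period_pair p == period_pair q) =
  (period p.1 == period q.1) && (period p.2 == period q.2).
Proof. by rewrite xpair_eqE -!val_eqE /= !inord_period. Qed.

Definition period_pair_move (st : 'I_N.+1 * 'I_N.+1) : cmap N A :=
  if [pick p | admissible p && (period_pair p == st)] is Some p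
  then orbit_move p.1 p.2 else cid N A.

Definition orbit_move_gens : {set cmap N A} := [set period_pair_move st | st in period_pairs].

Lemma orbit_move_gens_CA v : v \in orbit_move_gens -> is_CA v.
Proof.
case/imsetP=> st _ ->; apply/CA_equivariant; rewrite /period_pair_move.
case: pickP => [p /andP [/andP [_ /stab_subP sp] _]|_]; first exact: orbit_move_equivariant.
by move=> g x; rewrite !ffunE.
Qed.

Lemma orbit_move_gens_generate : generates (@is_CA N A) (@is_ICA N A) orbit_move_gens.
Proof.
move=> f; split=> [/CA_equivariant|]; last first.
  by move/(sgen_equivariant orbit_move_gens_CA)/CA_equivariant.
apply: equivariant_sgen_orbit_moves => [h|x y yx sxy]; first by left.
have xy_adm : admissible (x, y) by rewrite /admissible yx; apply/stab_subP.
have : period_pair_move (period_pair (x, y)) \in orbit_move_gens.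
  by apply/imset_f/imsetP; exists (x, y); rewrite ?inE.
rewrite /period_pair_move; case: pickP => [[x0 y0]|/(_ (x, y))]; last by rewrite xy_adm eqxx.
case/andP=> /andP [/= y0x0 /stab_subP s0]; rewrite period_pairE => /andP [/eqP px /eqP py] e0.
have [u [u_eq u_inj ux uy]] := units_transitive y0x0 yx px py.
have [v v_unit uv] := unit_inverse u_eq u_inj.
have -> : orbit_move x y = ccomp (ccomp v (orbit_move x0 y0)) u.
  by apply/ffunP=> w; rewrite !ccompE -(orbit_move_conj u_eq u_inj ux uy s0 sxy) uv.
apply: sgen_comp; [apply: sgen_comp|]; apply: sgen_base; [by left|by right|].
by left; apply/ICA_equivariant.
Qed.

Lemma period_pairs_le (V : {set cmap N A}) : (forall v, v \in V -> is_CA v) ->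
  generates (@is_CA N A) (@is_ICA N A) V -> #|period_pairs| <= #|V|.
Proof.
move=> V_CA V_gen.
pose invariants (h : cmap N A) : 'I_N.+1 * 'I_N.+1 := (inord (defect h), inord (collisions h)).
apply: leq_trans (leq_imset_card invariants V); apply: subset_leq_card.
apply/subsetP=> _ /imsetP [[x y] + ->]; rewrite inE => /andP [/= yx /stab_subP sxy].
have [h hV [dh ch]] := generators_realize_periods V_CA V_gen yx sxy.
by apply/imsetP; exists h; rewrite // /invariants dh ch.
Qed.

Lemma rank_period_pairs : relative_rank_is (@is_CA N A) (@is_ICA N A) #|period_pairs|.
Proof.
split=> [|V V_CA V_gen]; last exact: period_pairs_le.
exists orbit_move_gens; split; first exact: orbit_move_gens_CA.
split; first exact: orbit_move_gens_generate.
apply/eqP; rewrite eqn_leq leq_imset_card.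
exact: period_pairs_le orbit_move_gens_CA orbit_move_gens_generate.
Qed.

(** * Counting admissible period pairs *)

Lemma val_ZpD (h g : G) : nat_of_ord (h + g)%R = (h + g) %% N.
Proof. by []. Qed.

Lemma val_ZpDn (h : G) k : nat_of_ord (h + k%:R)%R = (h + k) %% N.
Proof. by rewrite val_ZpD val_Zp_nat // modnDmr. Qed.

Lemma val_Zp1 : nat_of_ord (1%:R%R : G) = 1.
Proof. by rewrite val_Zp_nat // modn_small. Qed.

Lemma dvdn_modN d k : d %| N -> (d %| k %% N) = (d %| k).
Proof. by move=> dN; rewrite /dvdn (modn_dvdm _ dN). Qed.

Definition stripe (d : nat) (a b : A) : X := [ffun h : G => if d %| h then a else b].

Definition double_stripe (d : nat) (a b : A) : X := [ffun h : G => if h %% d < 2 then a else b].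

Lemma period_stripe d a b : d %| N -> a != b -> period (stripe d a b) = d.
Proof.
move=> dN ab; apply: periodE (dvdn_gt0 _ dN) _ => // k; apply/eqP/idP.
  move/ffunP/(_ 0%R); rewrite shiftE !ffunE val_ZpDn add0n dvdn_modN // dvdn0.
  by case: ifP => // _ ba; move: ab; rewrite ba eqxx.
move=> dk; apply/ffunP=> h; rewrite shiftE !ffunE val_ZpDn dvdn_modN //.
by rewrite dvdn_addl.
Qed.

Lemma period_double_stripe d a b : d %| N -> 2 < d -> a != b -> period (double_stripe d a b) = d.
Proof.
move=> dN d_gt2 ab; apply: periodE (dvdn_gt0 _ dN) _ => // k; apply/eqP/idP; last first.
  move=> dk; apply/ffunP=> h; rewrite shiftE !ffunE val_ZpDn (modn_dvdm _ dN).
  by rewrite -modnDmr (eqP dk) addn0.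
move/ffunP=> xk; have := xk 0%R; have := xk 1%:R%R.
rewrite !shiftE !ffunE !val_ZpDn val_Zp1 !(modn_dvdm _ dN) /= mod0n (modn_small (ltnW d_gt2)) /=.
have a_b (P : bool) : ((if P then a else b) = a) -> P.
  by case: P => // ba; move: ab; rewrite ba eqxx.
move=> /a_b k1 /a_b k0; rewrite add0n in k0; rewrite /dvdn; move: k1.
by rewrite -modnDmr; case: (k %% d) k0 => [|[|//]] //= _; rewrite modn_small.
Qed.

Lemma stripe1_notin_orbit a b : a != b -> stripe 1 b a \notin shift_orbit (stripe 1 a b).
Proof.
move=> ab; apply/shift_orbitP=> [[g /ffunP /(_ 0%R)]].
by rewrite shiftE !ffunE !dvd1n => ba; move: ab; rewrite ba eqxx.
Qed.

Lemma stripes_notin_orbit d a b c : 1 < d -> c != a -> c != b ->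
  stripe d a c \notin shift_orbit (stripe d a b).
Proof.
move=> d_gt1 ca cb; apply/shift_orbitP=> [[g /ffunP /(_ 1%:R%R)]].
rewrite shiftE !ffunE val_Zp1 dvdn1 gtn_eqF //.
by case: ifP => _ c_ab; [move: ca | move: cb]; rewrite c_ab eqxx.
Qed.

Lemma double_stripe_notin_orbit d a b : d %| N -> 2 < d -> a != b ->
  double_stripe d a b \notin shift_orbit (stripe d a b).
Proof.
move=> dN d_gt2 ab; apply/shift_orbitP=> [[g /ffunP xg]].
have := xg 0%R; have := xg 1%:R%R.
rewrite !shiftE !ffunE add0r val_ZpD val_Zp1 dvdn_modN // mod0n (modn_small (ltnW d_gt2)) /=.
have a_b (P : bool) : (a = if P then a else b) -> P.
  by case: P => // ab'; move: ab; rewrite -ab' eqxx.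
move=> /a_b dg1 /a_b dg; move: dg1; rewrite dvdn_addl // => /(dvdn_leq (ltn0Sn 0)).
by rewrite leqNgt (ltn_trans _ d_gt2).
Qed.

Lemma shift2_parity (x : X) : shift 2%:R%R x = x ->
  forall j, x j%:R%R = if odd j then x 1%:R%R else x 0%R.
Proof.
move=> x2; elim/ltn_ind=> -[|[|j]] IHj //.
have := congr1 (fun y : X => y j%:R%R) x2; rewrite /= shiftE -natrD addn2 => ->.
by rewrite IHj //= negbK.
Qed.

Lemma period2_alternates (x : X) : period x = 2 -> x 0%R != x 1%:R%R.
Proof.
move=> px; have x2 : shift 2%:R%R x = x by apply/eqP; rewrite period_dvd px.
apply/negP=> /eqP x01; suff : period x %| 1 by rewrite px.
rewrite -period_dvd; apply/eqP/ffunP=> h; rewrite shiftE -[h](natr_Zp h) -natrD.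
by rewrite (shift2_parity x2 (h + 1)) (shift2_parity x2 h) addn1 /= x01; case: odd.
Qed.

Lemma binary_letter (a b w : A) : #|A| = 2 -> a != b -> (w == a) || (w == b).
Proof.
move=> A2 ab; apply: contraT; rewrite negb_or => /andP [wa wb].
have := max_card (w |: [set a; b]).
by rewrite cardsU1 cards2 ab !inE negb_or wa wb A2.
Qed.

Lemma binary_period2_orbit x y : #|A| = 2 -> period x = 2 -> period y = 2 ->
  y \in shift_orbit x.
Proof.
move=> A2 px py; have x01 := period2_alternates px; have y01 := period2_alternates py.
have x2 : shift 2%:R%R x = x by apply/eqP; rewrite period_dvd px.
have y2 : shift 2%:R%R y = y by apply/eqP; rewrite period_dvd py.
have y_x w : (w == x 0%R) || (w == x 1%:R%R) := binary_letter w A2 x01.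
apply/shift_orbitP; case: (eqVneq (y 0%R) (x 0%R)) => [y0x0|y0x0].
  have y1x1 : y 1%:R%R = x 1%:R%R.
    by case/orP: (y_x (y 1%:R%R)) => /eqP // y1x0; move: y01; rewrite y0x0 y1x0 eqxx.
  exists 0%R; apply/ffunP=> h; rewrite shift0 -[h](natr_Zp h).
  by rewrite (shift2_parity x2 h) (shift2_parity y2 h) y0x0 y1x1.
have y0x1 : y 0%R = x 1%:R%R by case/orP: (y_x (y 0%R)) => /eqP // y0x0'; case/eqP: y0x0.
have y1x0 : y 1%:R%R = x 0%R.
  by case/orP: (y_x (y 1%:R%R)) => /eqP // y1x1; move: y01; rewrite y0x1 y1x1 eqxx.
exists 1%:R%R; apply/ffunP=> h; rewrite shiftE -[h](natr_Zp h) -natrD.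
by rewrite (shift2_parity x2 (h + 1)) (shift2_parity y2 h) addn1 /= y0x1 y1x0; case: odd.
Qed.

Lemma third_letter (a b : A) : 2 < #|A| -> exists c, (c != a) && (c != b).
Proof.
move=> A_gt2; apply/existsP; apply: contraTT A_gt2 => /existsPn none.
rewrite -leqNgt; apply: (@leq_trans #|[set a; b]|); last by rewrite cards2; case: (a != b).
apply/subset_leq_card/subsetP=> c _; rewrite !inE.
by move: (none c); rewrite negb_and !negbK orbC.
Qed.

Lemma admissible_witness s t : 1 < #|A| -> s %| N -> t %| N -> t %| s ->
  ~~ [&& #|A| == 2, s == 2 & t == 2] ->
  exists2 p, admissible p & period p.1 = s /\ period p.2 = t.
Proof.
move=> A_gt1 sN tN ts not_binary22; have [a [b [_ _ ab]]] := card_gt1P A_gt1.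
have [eq_ts|t_ne_s] := eqVneq t s; last first.
  exists (stripe s a b, stripe t a b); rewrite /admissible /= !period_stripe // ts andbT.
  by apply: period_neq_notin; rewrite !period_stripe.
subst t; have s_gt0 : 0 < s := dvdn_gt0 (ltn0Sn _) sN.
case: (ltngtP s 2) => [s_lt2|s_gt2|s2].
- have -> : s = 1 by apply/eqP; rewrite eqn_leq -ltnS s_lt2.
  exists (stripe 1 a b, stripe 1 b a); last by rewrite !period_stripe // eq_sym.
  by apply/andP; split; [exact: stripe1_notin_orbit | rewrite !period_stripe // eq_sym].
- exists (stripe s a b, double_stripe s a b); last by rewrite period_stripe // period_double_stripe.
  apply/andP; split; first exact: double_stripe_notin_orbit.
  by rewrite period_stripe // period_double_stripe.
have A_gt2 : 2 < #|A|.
  move: not_binary22; rewrite s2 eqxx !andbT.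
  by rewrite ltn_neqAle eq_sym A_gt1 => ->.
have [c /andP [ca cb]] := third_letter a b A_gt2.
exists (stripe s a b, stripe s a c); last by rewrite !period_stripe // eq_sym.
apply/andP; split; first by apply: stripes_notin_orbit; rewrite ?s2.
by rewrite !period_stripe // eq_sym.
Qed.

Lemma mem_period_pairs (st : 'I_N.+1 * 'I_N.+1) : 1 < #|A| ->
  (st \in period_pairs) = [&& st.1 %| N, st.2 %| N, st.2 %| st.1 &
                ~~ [&& #|A| == 2, nat_of_ord st.1 == 2 & nat_of_ord st.2 == 2]].
Proof.
move=> A_gt1; apply/imsetP/idP=> [[[x y] + ->]|].
  rewrite inE => /andP [/= yx yx_dvd]; rewrite /= !inord_period !period_dvdN yx_dvd /=.
  by apply: contra yx => /and3P [/eqP A2 /eqP px /eqP py]; apply: binary_period2_orbit.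
case: st => s t /and4P [/= sN tN ts not_binary22].
have [[x y] xy_adm [/= px py]] := admissible_witness A_gt1 sN tN ts not_binary22.
by exists (x, y); rewrite ?inE // /period_pair /= px py !inord_val.
Qed.

Definition divisor_pairs : {set 'I_N.+1 * 'I_N.+1} :=
  [set st : 'I_N.+1 * 'I_N.+1 | [&& st.1 %| N, st.2 %| N & st.2 %| st.1]].

Lemma big_nat1_ord n (F : nat -> nat) : F 0 = 0 ->
  \sum_(1 <= i < n.+1) F i = \sum_(i < n.+1) F i.
Proof.
move=> F0; have -> : \sum_(i < n.+1) F i = \sum_(0 <= i < n.+1) F i by rewrite big_mkord.
by rewrite (big_ltn (ltn0Sn _)) F0 add0n.
Qed.

Lemma card_divisor_pairs : #|divisor_pairs| = E N.
Proof.
rewrite /E big_nat1_ord; last by rewrite big1 // => t _; rewrite dvd0n.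
under eq_bigr => s _ do rewrite big_nat1_ord ?dvdn0 ?andbF //.
rewrite pair_bigA -sum1_card big_mkcond /=; apply: eq_bigr => -[s t] _.
by rewrite inE.
Qed.

Lemma card_period_pairs : 1 < #|A| ->
  #|period_pairs| = if (#|A| == 2) && ~~ odd N then E N - 1 else E N.
Proof.
move=> A_gt1; rewrite -card_divisor_pairs; case: ifP => [/andP [/eqP A2 N_even]|not_binary_even].
  pose p22 : 'I_N.+1 * 'I_N.+1 := (inord 2, inord 2).
  have p22_in : p22 \in divisor_pairs by rewrite inE /= inordK // dvdn2 N_even dvdnn.
  suff -> : period_pairs = divisor_pairs :\ p22.
    by rewrite (cardsD1 p22 divisor_pairs) p22_in add1n subSS subn0.
  apply/setP=> -[s t]; rewrite mem_period_pairs // !inE A2 eqxx /= xpair_eqE.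
  by rewrite [RHS]andbC -!andbA -(val_eqE s) -(val_eqE t) /= inordK.
apply: eq_card => -[s t]; rewrite mem_period_pairs // inE /=.
have [/and3P [/eqP A2 /eqP s2 _]|] := boolP [&& #|A| == 2, nat_of_ord s == 2 & _].
  by move: not_binary_even; rewrite A2 eqxx s2 dvdn2 => /negbFE ->.
by rewrite andbT.
Qed.

End CyclicCA.

Theorem lemma9 (n : nat) (A : finType) :
  (2 <= n)%N -> (2 <= #|A|)%N ->
  relative_rank_is (@is_CA n A) (@is_ICA n A)
    (if (#|A| == 2%N) && ~~ odd n then (E n - 1)%N else E n).
Proof.
case: n => [|[|m]] // _ A_gt1.
by rewrite -card_period_pairs //; apply: rank_period_pairs.
Qed.
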